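(* In the setting of the context, suppose that $\rho:=\rho_{\mathcal A_\nu,\mathcal S_{\log},\pi_{\log}}$ is proper, convex, and lower semicontinuous with respect to $\tau_{\log}$. Then for all $X\in\mathcal C$, $$\eta_{\mathfrak R}(X)=\sup_{\varphi\in\mathcal D_{\ge1}}\exp\Big(\varphi(X)-\sup_{Y\in\mathcal B_{\tilde\rho}}\varphi(Y)-\sup_{Z\in\mathcal S}\big(\varphi(Z)-\log\pi(Z)\big)\Big),$$ where $\mathcal D_{\ge1}$ is the set of all log-linear $\tau$-continuous $\varphi\colon\mathcal C\to\mathbb R$ such that $\varphi(X)\ge0$ for all $X\in\mathcal C\cap\mathcal K$ with $X\ge1$ a.s.
   Context: Probability space $(\Omega,\mathcal F,P)$; $L^0_{++}$ = a.s. strictly positive random variables; $L^\infty_{++}=L^\infty\cap L^0_{++}$; $\frac{\mathcal A}{\mathcal D}=\{AD^{-1}\}$. Setting: nonempty $\mathcal C,\mathcal S,\mathcal K\subset L^0_{++}$ with $\frac{\mathcal C}{\mathcal S}\subset\mathcal K$, $\mathcal K$ a cone, $(\mathcal C,\cdot)$ a group, and (so that all expressions are defined) $\mathcal K\subset\mathcal C$ and $\mathcal S\subset\mathcal C$; pricing map $\pi\colon\mathcal S\to(0,\infty)$. $\mathcal C_{\log},\mathcal S_{\log},\mathcal K_{\log}$ are the images under $\log$. $\mathcal C_{\log}$ is equipped with a topology $\tau_{\log}$ making it a locally convex topological vector space; $\mathcal C$ carries $\tau=\{\exp(U):U\in\tau_{\log}\}$, so $\exp$ is a homeomorphism. A map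 $\varphi\colon\mathcal C\to\mathbb R$ is log-linear if $\varphi(X^\alpha Y^\beta)=\alpha\varphi(X)+\beta\varphi(Y)$ for $X,Y\in\mathcal C$, $\alpha,\beta\in\mathbb R$; equivalently the log-linear $\tau$-continuous maps are exactly $\psi\circ\log$ with $\psi$ in the topological dual of $\mathcal C_{\log}$. A return risk measure (RRM), with $L^\infty_{++}\subset\mathcal K$, is a positively homogeneous nondecreasing $\tilde\rho\colon\mathcal K\to(0,\infty)$ with $\tilde\rho(1)=1$; $\mathcal B_{\tilde\rho}=\{K\in\mathcal K:\tilde\rho(K)\le1\}$; $\mathfrak R=(\mathcal B_{\tilde\rho},\mathcal S,\pi)$; MARRM $\eta_{\mathfrak R}(X)=\inf\{\pi(Z):Z\in\mathcal S,\ X/Z\in\mathcal B_{\tilde\rho}\}$. Further $\nu=\log\circ\tilde\rho\circ\exp$, $\mathcal A_\nu=\{Y\in\mathcal K_{\log}:\nu(Y)\le0\}$, $\pi_{\log}=\log\circ\pi\circ\exp$ on $\mathcal S_{\log}$, and $\rho_{\mathcal A_\nu,\mathcal S_{\log},\pi_{\log}}(X_{\log})=\inf\{\pi_{\log}(L):L\in\mathcal S_{\log},\ X_{\log}-L\in\mathcal A_\nu\}$ on $\mathcal C_{\log}$. Proper means: never $-\infty$ and finite at some point. Conventions $\exp(-\infty)=0$, $\exp(\infty)=\infty$. *)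

From HB Require Import structures.
From mathcomp Require Import all_boot all_order all_algebra.
From mathcomp Require Import all_classical all_reals all_analysis.
Set Implicit Arguments. Unset Strict Implicit. Unset Printing Implicit Defensive.
Import Order.TTheory GRing.Theory Num.Theory.
Import numFieldNormedType.Exports.
Local Open Scope classical_set_scope.
Local Open Scope ring_scope.

(* Encoding: the log-space C_log (a vector subspace of L^0,
   with the locally convex topology tau_log) is represented by a tvsType V
   together with a map iota : V -> (Omega -> R) which is linear and injective
   up to P-a.s. equality and takes values in measurable functions.  An
   element v : V stands for the random variable X = exp (iota v) in C.
   Products/powers X^a Y^b in C correspond to a *: v + b *: w in V, and
   the topology tau = exp(tau_log) corresponds to the topology of V. *)

Section defs.
Context {d : measure_display} {Omega : measurableType d} {R : realType}
  (P : probability Omega R) (V : tvsType R) (iota : V -> Omega -> R).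

Definition as_ (Q : Omega -> Prop) : Prop := {ae P, forall w, Q w}.

Definition log_embedding : Prop :=
  [/\ (forall v, measurable_fun setT (iota v)),
      (forall (a b : R) (v w : V),
          as_ (fun t => iota (a *: v + b *: w) t = a * iota v t + b * iota w t)) &
      (forall v w : V, as_ (fun t => iota v t = iota w t) -> v = w)].

Variables (S K : set V) (pi rhot : V -> R).

(* K is a cone: lambda X in K for X in K, lambda > 0 *)
Definition is_cone_K : Prop := forall v (lam : R), K v -> 0 < lam ->
  exists u, K u /\ as_ (fun t => iota u t = iota v t + ln lam).

Definition CS_sub_K : Prop := forall v s, S s -> K (v - s).

Definition Linfpp_sub_K : Prop := forall Y : Omega -> R,
  measurable_fun setT Y -> as_ (fun t => 0 < Y t) ->
  (exists M : R, as_ (fun t => Y t <= M)) ->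
  exists v, K v /\ as_ (fun t => iota v t = ln (Y t)).

Definition pricing : Prop := forall z, S z -> 0 < pi z.

Definition RRM : Prop :=
  [/\ (forall v, K v -> 0 < rhot v),
      (forall v u (lam : R), K v -> K u -> 0 < lam ->
         as_ (fun t => iota u t = iota v t + ln lam) -> rhot u = lam * rhot v),
      (forall v w, K v -> K w -> as_ (fun t => expR (iota v t) <= expR (iota w t)) ->
         rhot v <= rhot w) &
      (forall u, K u -> as_ (fun t => expR (iota u t) = 1) -> rhot u = 1)].

Definition B_rhot : set V := [set v | K v /\ rhot v <= 1].

Definition eta_R (v : V) : \bar R :=
  ereal_inf [set (pi z)%:E | z in [set z | S z /\ B_rhot (v - z)]].

Definition nu (u : V) : R := ln (rhot u).
Definition A_nu : set V := [set u | K u /\ nu u <= 0].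
Definition pi_log (l : V) : R := ln (pi l).
Definition rho_log (x : V) : \bar R :=
  ereal_inf [set (pi_log l)%:E | l in [set l | S l /\ A_nu (x - l)]].

Definition D_ge1 : set (V -> R) := [set phi |
  [/\ (forall (a b : R) (v w : V), phi (a *: v + b *: w) = a * phi v + b * phi w),
      continuous phi &
      (forall v, K v -> as_ (fun t => 1 <= expR (iota v t)) -> 0 <= phi v)]].

End defs.

Section fun_props.
Context {R : realType} (V : tvsType R).
Local Open Scope ereal_scope.

Definition proper_fun (f : V -> \bar R) : Prop :=
  (forall x, f x != -oo) /\ (exists x, f x \is a fin_num).

Definition convex_efun (f : V -> \bar R) : Prop :=
  forall (x y : V) (l : R), (0 < l < 1)%R ->
    f (l *: x + (1 - l) *: y)%R <= l%:E * f x + (1 - l)%:E * f y.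
End fun_props.

(* Weak duality is a computation: if [Z \in S] and [X / Z \in B], then for log-linear
   [phi], [phi X = phi (X / Z) + (phi Z - log pi Z) + log pi Z], which bounds every dual
   value by [pi Z].  For the converse pass to log space, where [eta = exp \o rho] and
   [rho] is proper, convex and lower semicontinuous: separating a point below [rho X] from
   the epigraph of [rho] (Hahn-Banach, through the gauge of an open convex set) yields a
   continuous affine minorant [psi - s] of [rho] lying above that point at [X].  Being a
   minorant forces [sup_B psi + sup_S (psi - log pi) <= s], and, because [B] is stable
   under [Y |-> Y^(-t)] for [Y >= 1], also [psi >= 0] on [{Y >= 1}]; so [psi] belongs to
   [D_ge1] and its dual value is at least [exp (psi X - s)]. *)

From HB Require Import structures.
From mathcomp Require Import all_boot all_order all_algebra.
From mathcomp Require Import all_classical all_reals all_analysis.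
From mathcomp Require Import ring lra.
Set Implicit Arguments. Unset Strict Implicit. Unset Printing Implicit Defensive.
Import Order.TTheory GRing.Theory Num.Theory.
Import numFieldNormedType.Exports.
Local Open Scope classical_set_scope.
Local Open Scope ring_scope.

Definition linear_form {R : realType} {M : lmodType R} (F : M -> R) :=
  forall a b x y, F (a *: x + b *: y) = a * F x + b * F y.

Section linear_form_theory.
Context {R : realType} {M : lmodType R} (F : M -> R) (hF : linear_form F).

Lemma linear_formD x y : F (x + y) = F x + F y.
Proof. by have := hF 1 1 x y; rewrite !scale1r !mul1r. Qed.

Lemma linear_formZ a x : F (a *: x) = a * F x.
Proof. by have := hF a 0 x x; rewrite scale0r addr0 mul0r addr0. Qed.

Lemma linear_formN x : F (- x) = - F x.
Proof. by rewrite -scaleN1r linear_formZ mulN1r. Qed.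

Lemma linear_formB x y : F (x - y) = F x - F y.
Proof. by rewrite linear_formD linear_formN. Qed.

End linear_form_theory.

Definition convex {R : realType} {M : lmodType R} (A : set M) :=
  forall x y (l : R), 0 <= l <= 1 -> A x -> A y -> A (l *: x + (1 - l) *: y).

Lemma convexW {R : realType} {M : lmodType R} (A : set M) :
  (forall x y (l : R), 0 < l < 1 -> A x -> A y -> A (l *: x + (1 - l) *: y)) ->
  convex A.
Proof.
move=> h x y l /andP[l0 l1] Ax Ay.
have [->|ln0] := eqVneq l 0; first by rewrite scale0r add0r subr0 scale1r.
have [->|ln1] := eqVneq l 1; first by rewrite scale1r subrr scale0r addr0.
by apply: h => //; rewrite !lt_neqAle eq_sym ln0 l0 ln1 l1.
Qed.

Section HahnBanach.
Context {R : realType} {E : lmodType R} (p : E -> R).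
Hypothesis p_add : forall x y, p (x + y) <= p x + p y.
Hypothesis p_scale : forall (t : R) x, 0 < t -> p (t *: x) = t * p x.

Lemma sublinear0 : p 0 = 0.
Proof. by have := p_scale 0 (ltr0Sn _ 1); rewrite scaler0 => h; lra. Qed.

Lemma sublinear_scale_ge x (t : R) : t * p x <= p (t *: x).
Proof.
have [t0|t0|->] := ltgtP t 0; last by rewrite mul0r scale0r sublinear0.
- have := p_add (t *: x) ((- t) *: x); rewrite -scalerDl subrr scale0r sublinear0.
  by rewrite [p (- t *: x)]p_scale ?oppr_gt0 //; lra.
- by rewrite p_scale.
Qed.

(* A partial linear functional is encoded by its graph [G : set (E * R)]. *)
Definition linear_graph (G : set (E * R)) := forall (a b : R) x y, G x -> G y ->
  G (a *: x.1 + b *: y.1, a * x.2 + b * y.2).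
Definition functional_graph (G : set (E * R)) :=
  forall x y, G x -> G y -> x.1 = y.1 -> x.2 = y.2.
Definition dominated_graph (G : set (E * R)) := forall x, G x -> x.2 <= p x.1.

Section graph_extension.
Variables (A : set (E * R)) (x1 : E).
Hypotheses (Alin : linear_graph A) (Adom : dominated_graph A) (A_ne : A !=set0).

Let A00 : A (0, 0).
Proof. by case: A_ne => u Au; have := Alin 0 0 Au Au; rewrite !scale0r !mul0r !addr0. Qed.

Let Aadd y r y' r' : A (y, r) -> A (y', r') -> A (y + y', r + r').
Proof. by move=> h h'; have := Alin 1 1 h h'; rewrite /= !scale1r !mul1r. Qed.

Lemma extension_constant : exists c : R,
  (forall y r, A (y, r) -> r - p (y - x1) <= c) /\
  (forall y r, A (y, r) -> c <= p (y + x1) - r).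
Proof.
pose L := [set yr.2 - p (yr.1 - x1) | yr in A].
have key y r y' r' : A (y, r) -> A (y', r') -> r - p (y - x1) <= p (y' + x1) - r'.
  move=> h h'; have := Adom (Aadd h h'); have := p_add (y - x1) (y' + x1).
  by rewrite /= addrCA subrK [y' + y]addrC; lra.
have hL : has_sup L.
  split; first by exists (0 - p (0 - x1)), (0, 0).
  by exists (p (0 + x1) - 0) => _ [[y r] Ayr <-]; exact: key.
exists (sup L); split => [y r h|y r h].
  by apply: sup_upper_bound => //; exists (y, r).
by apply: ge_sup; [case: hL|move=> _ [[y' r'] Ayr <-]; exact: key].
Qed.

Definition graph_extension (c : R) :=
  [set u | exists y r t, A (y, r) /\ u = (y + t *: x1, r + t * c)].

Lemma sub_graph_extension c : A `<=` graph_extension c.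
Proof. by move=> [y r] h; exists y, r, 0; rewrite scale0r mul0r !addr0. Qed.

Lemma graph_extension_new c : graph_extension c (x1, c).
Proof. by exists 0, 0, 1; rewrite scale1r mul1r !add0r. Qed.

Lemma graph_extension_linear c : linear_graph (graph_extension c).
Proof.
move=> a b _ _ [y [r [t [h ->]]]] [y' [r' [t' [h' ->]]]] /=.
exists (a *: y + b *: y'), (a * r + b * r'), (a * t + b * t'); split.
  exact: (Alin a b h h').
congr pair; last by ring.
by rewrite !scalerDr !scalerA scalerDl -!addrA; congr (_ + _); rewrite addrCA.
Qed.

Lemma graph_extension_functional c : functional_graph A ->
  ~ (exists r, A (x1, r)) -> functional_graph (graph_extension c).
Proof.
move=> Afun nx _ _ [y [r [t [h ->]]]] [y' [r' [t' [h' ->]]]] /= e.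
have [tt|tt] := eqVneq t t'.
  by rewrite tt in e *; move/addIr: e => e; have /= -> := Afun _ _ h h' e.
(* two distinct values of [t] would put [x1] in the domain of [A] *)
have e2 : (t - t') *: x1 = y' - y.
  by rewrite scalerBl -(addrKA y (t *: x1)) [t *: x1 + y]addrC e [y + _]addrC addrKA.
have tn : t - t' != 0 by rewrite subr_eq0.
case: nx; exists ((t - t')^-1 * r' + (- (t - t')^-1) * r).
have -> : x1 = (t - t')^-1 *: y' + (- (t - t')^-1) *: y.
  by rewrite scaleNr -scalerBr -e2 scalerA mulVf // scale1r.
exact: (Alin _ _ h' h).
Qed.

Lemma graph_extension_dominated c :
  (forall y r, A (y, r) -> r - p (y - x1) <= c) ->
  (forall y r, A (y, r) -> c <= p (y + x1) - r) ->
  dominated_graph (graph_extension c).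
Proof.
move=> lowc upc _ [y [r [t [h ->]]]] /=.
have Asc a : A (a *: y, a * r).
  by have := Alin a 0 h h; rewrite /= scale0r mul0r !addr0.
have [t0|t0|->] := ltgtP t 0; last by rewrite scale0r mul0r !addr0; exact: (Adom h).
- rewrite -oppr_gt0 in t0; have := lowc _ _ (Asc (- t)^-1).
  have -> : y + t *: x1 = (- t) *: ((- t)^-1 *: y - x1).
    by rewrite scalerBr scalerA mulfV ?gt_eqF // scale1r scaleNr opprK addrC.
  rewrite p_scale // => hc.
  have := ler_wpM2l (ltW t0) hc.
  by rewrite mulrBr mulrA mulfV ?gt_eqF // mul1r; lra.
- have := upc _ _ (Asc t^-1).
  have -> : y + t *: x1 = t *: (t^-1 *: y + x1).
    by rewrite scalerDr scalerA mulfV ?gt_eqF // scale1r.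
  rewrite p_scale // => hc.
  have := ler_wpM2l (ltW t0) hc.
  by rewrite mulrBr mulrA mulfV ?gt_eqF // mul1r; lra.
Qed.

End graph_extension.

Variable x0 : E.

Definition hb_graph G :=
  [/\ linear_graph G, functional_graph G, dominated_graph G & G (x0, p x0)].

Lemma hb_graph_bigcup (F : set (set (E * R))) :
  F `<=` (fun G => G = set0 \/ hb_graph G) -> total_on F subset ->
  \bigcup_(X in F) X = set0 \/ hb_graph (\bigcup_(X in F) X).
Proof.
move=> FP Ft; set U := \bigcup_(X in F) X.
have [[X0 [FX0 [u X0u]]]|nX] := pselect (exists X, F X /\ X !=set0); last first.
  left; apply/seteqP; split=> // u [X FX Xu]; apply: nX; exists X; split=> //.
  by exists u.
have hbF X : F X -> X !=set0 -> hb_graph X.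
  by move=> FX [v Xv]; case: (FP X FX) => // X0e; rewrite X0e in Xv.
have common w1 w2 : U w1 -> U w2 -> exists Y, [/\ F Y, hb_graph Y, Y w1 & Y w2].
  move=> [Y1 F1 Y1u] [Y2 F2 Y2v].
  case: (Ft _ _ F1 F2) => h.
    by exists Y2; split=> //; [apply: hbF => //; exists w2|apply: h].
  by exists Y1; split=> //; [apply: hbF => //; exists w1|apply: h].
right; split.
- move=> a b x y Ux Uy; have [Y [FY [gl _ _ _] Yx Yy]] := common _ _ Ux Uy.
  by exists Y => //; apply: gl.
- by move=> x y Ux Uy; have [Y [_ [_ gf _ _] Yx Yy]] := common _ _ Ux Uy; exact: gf.
- by move=> x [Y FY Yx]; have [_ _ gd _] := hbF Y FY (ex_intro _ x Yx); exact: gd.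
- by have [_ _ _ g0] := hbF X0 FX0 (ex_intro _ u X0u); exists X0.
Qed.

Lemma hb_graph_line : hb_graph [set u | exists t : R, u = (t *: x0, t * p x0)].
Proof.
split.
- move=> a b _ _ [t ->] [t' ->] /=; exists (a * t + b * t').
  by rewrite !scalerA scalerDl; congr pair; ring.
- move=> _ _ [t ->] [t' ->] /= e.
  have [->|x0n] := eqVneq x0 0; first by rewrite sublinear0 !mulr0.
  have : (t - t') *: x0 == 0 by rewrite scalerBl e subrr.
  by rewrite scaler_eq0 (negbTE x0n) orbF subr_eq0 => /eqP ->.
- by move=> _ [t ->] /=; exact: sublinear_scale_ge.
- by exists 1; rewrite scale1r mul1r.
Qed.

Lemma hb_graph_maximal : exists A, hb_graph A /\ forall B, A `<` B -> ~ hb_graph B.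
Proof.
have [A [[A0|hbA] mx]] := Zorn_bigcup hb_graph_bigcup; last first.
  by exists A; split=> // B AB hbB; apply: (mx B AB); right.
exfalso; apply: (mx _ _ (or_intror hb_graph_line)).
by rewrite A0; split=> // h; apply: (h (x0, p x0)); exists 1; rewrite scale1r mul1r.
Qed.

Lemma hb_graph_maximal_total A : hb_graph A ->
  (forall B, A `<` B -> ~ hb_graph B) -> forall x, exists r, A (x, r).
Proof.
move=> [gl gf gd g0] mx x1; apply: contrapT => nx.
have A_ne : A !=set0 by exists (x0, p x0).
have [c [lowc upc]] := extension_constant x1 gl gd A_ne.
apply: (mx (graph_extension A x1 c)).
  split; first exact: sub_graph_extension.
  by move=> h; apply: nx; exists c; apply/h/graph_extension_new.
split; first exact: graph_extension_linear.
- exact: graph_extension_functional.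
- exact: graph_extension_dominated.
- exact: sub_graph_extension.
Qed.

Theorem hahn_banach : exists F : E -> R,
  [/\ linear_form F, (forall x, F x <= p x) & F x0 = p x0].
Proof.
have [A [[gl gf gd g0] mx]] := hb_graph_maximal.
have tot := hb_graph_maximal_total (And4 gl gf gd g0) mx.
pose F x := projT1 (cid (tot x)).
have FA x : A (x, F x) by rewrite /F; case: cid.
exists F; split.
- by move=> a b x y; apply: (gf (_, _) (_, _) (FA _) (gl a b _ _ (FA x) (FA y))).
- by move=> x; exact: (gd _ (FA x)).
- exact: (gf (_, _) (_, _) (FA x0) g0).
Qed.

End HahnBanach.

Lemma scaler_near {R : realType} {E : tvsType R} (x : E) (s0 : R) (U : set E) :
  nbhs (s0 *: x) U -> exists2 e : R, 0 < e & forall s, `|s - s0| < e -> U (s *: x).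
Proof.
move=> /(@scale_continuous R E (s0, x)) [[B1 B2] /= [/nbhs_ballP [e /= e0 he] nB2]] sub.
exists e => // s hs; apply: (sub (s, x)); split => /=; last exact: nbhs_singleton.
by apply: he; rewrite /ball /= distrC.
Qed.

Lemma linear_form_continuous {R : realType} {E : tvsType R} (G : E -> R) (W : set E) :
  linear_form G -> nbhs 0 W -> (forall w, W w -> G w < 1) -> continuous G.
Proof.
move=> hG W0 GW x; apply/cvgrPdist_lt => e e0.
have WN0 : nbhs (0 : E) (W `&` (-%R @` W)) by apply: filterI => //; exact: nbhs0N.
have := nbhsT x (nbhs0Z (lt0r_neq0 e0) WN0).
apply: filterS => _ [_ [w [Ww [b Wb bw]] <-] <-] /=.
rewrite (linear_formD hG) (linear_formZ hG) opprD addNKr normrN normrM gtr0_norm //.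
rewrite -[X in _ < X]mulr1 ltr_pM2l // ltr_norml GW // andbT ltrNl -(linear_formN hG).
by rewrite -bw opprK GW.
Qed.

Section gauge.
Context {R : realType} {E : tvsType R} (B : set E).
Hypotheses (Bconv : convex B) (B0 : nbhs (0 : E) B) (Bopen : forall x, B x -> nbhs x B).

Definition gauge_set (x : E) := [set t : R | 0 < t /\ B (t^-1 *: x)].
Definition gauge x := inf (gauge_set x).

Lemma gauge_set_neq0 x : gauge_set x !=set0.
Proof.
have := @scaler_near R E x 0 B; rewrite scale0r => /(_ B0) [e e0 he].
exists (2 / e); split; first by rewrite divr_gt0.
apply: he; rewrite subr0 invf_div ger0_norm ?divr_ge0 ?ltW //.
by rewrite ltr_pdivrMr // ltr_pMr // ltr1n.
Qed.

Lemma gauge_set_lbound x : lbound (gauge_set x) 0.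
Proof. by move=> t [t0 _]; apply: ltW. Qed.

Lemma gauge_set_up x t t' : gauge_set x t -> t <= t' -> gauge_set x t'.
Proof.
move=> [t0 Bt] tt'; have t'0 : 0 < t' by apply: lt_le_trans tt'.
split=> //.
have -> : t'^-1 *: x = (t / t') *: (t^-1 *: x) + (1 - t / t') *: 0.
  by rewrite scaler0 addr0 scalerA mulrC mulrA mulVf ?gt_eqF // mul1r.
apply: Bconv => //; last exact: nbhs_singleton.
by rewrite ler_pdivrMr // mul1r tt' andbT divr_ge0 ?ltW.
Qed.

Lemma gauge_le x t : gauge_set x t -> gauge x <= t.
Proof. by move=> h; apply: ge_inf => //; exists 0; exact: gauge_set_lbound. Qed.

Lemma gauge_lt x t : gauge x < t -> gauge_set x t.
Proof.
by move=> /(inf_lt (gauge_set_neq0 x)) [s hs st]; apply: gauge_set_up hs _; exact: ltW.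
Qed.

Lemma gauge_scale t x : 0 < t -> gauge (t *: x) = t * gauge x.
Proof.
move=> t0; apply/eqP; rewrite eq_le; apply/andP; split.
  apply/ler_addgt0Pr => e e0.
  have [u0 Bu] : gauge_set x (gauge x + e / t) by apply: gauge_lt; rewrite ltrDl divr_gt0.
  have -> : t * gauge x + e = t * (gauge x + e / t).
    by rewrite mulrDr mulrCA mulfV ?gt_eqF // mulr1.
  apply: gauge_le; split; first by rewrite mulr_gt0.
  by rewrite scalerA invfM mulrAC mulVf ?gt_eqF // mul1r.
apply: lb_le_inf; first exact: gauge_set_neq0.
move=> s [s0 Bs]; rewrite -ler_pdivlMl //.
apply: gauge_le; split; first by rewrite mulr_gt0 ?invr_gt0.
by rewrite invfM invrK scalerA mulrC in Bs *.
Qed.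

Lemma gauge_add x y : gauge (x + y) <= gauge x + gauge y.
Proof.
apply/ler_addgt0Pr => e e0.
have e2 : 0 < e / 2 by rewrite divr_gt0.
have [t0 Bt] : gauge_set x (gauge x + e / 2) by apply: gauge_lt; rewrite ltrDl.
have [s0 Bs] : gauge_set y (gauge y + e / 2) by apply: gauge_lt; rewrite ltrDl.
set t := gauge x + e / 2 in t0 Bt; set s := gauge y + e / 2 in s0 Bs.
have -> : gauge x + gauge y + e = t + s by rewrite /t /s; lra.
have ts0 : 0 < t + s by rewrite addr_gt0.
apply: gauge_le; split => //.
have -> : (t + s)^-1 *: (x + y) =
    (t / (t + s)) *: (t^-1 *: x) + (1 - t / (t + s)) *: (s^-1 *: y).
  have -> : 1 - t / (t + s) = s / (t + s).
    by rewrite -[X in X - _](@divff _ (t + s)) ?gt_eqF // -mulrBl addrAC subrr add0r.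
  by rewrite !scalerA scalerDr; congr (_ *: _ + _ *: _);
    rewrite mulrAC mulfV ?gt_eqF // mul1r.
apply: Bconv => //; rewrite divr_ge0 ?(ltW t0) ?(ltW ts0) //=.
by rewrite ler_pdivrMr // mul1r lerDl ltW.
Qed.

Lemma gauge_lt1 x : B x -> gauge x < 1.
Proof.
move=> Bx; have := @scaler_near R E x 1 B; rewrite scale1r => /(_ (Bopen Bx)).
move=> [e e0 he].
have e2 : 0 < e / 2 by rewrite divr_gt0.
have h1 : 1 < 1 + e / 2 by rewrite ltrDl.
apply: (le_lt_trans (y := (1 + e / 2)^-1)); last by rewrite invf_lt1 // (lt_trans ltr01).
apply: gauge_le; split; first by rewrite invr_gt0 (lt_trans ltr01).
rewrite invrK; apply: he; rewrite addrAC subrr add0r ger0_norm ?ltW //.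
by rewrite ltr_pdivrMr // ltr_pMr // ltr1n.
Qed.

Lemma gauge_lt1_mem x : gauge x < 1 -> B x.
Proof. by move/gauge_lt => [_]; rewrite invr1 scale1r. Qed.

End gauge.

Lemma open_convex_separation {R : realType} {E : tvsType R} (A : set E) :
  convex A -> open A -> A !=set0 -> ~ A 0 ->
  exists F : E -> R, [/\ linear_form F, continuous F & forall u, A u -> 0 < F u].
Proof.
move=> Aconv oA [w0 Aw0] nA0.
pose B := [set u | A (u + w0)].
have Bconv : convex B.
  move=> x y l hl Bx By; rewrite /B /=.
  have -> : l *: x + (1 - l) *: y + w0 = l *: (x + w0) + (1 - l) *: (y + w0).
    by rewrite !scalerDr addrACA -scalerDl addrCA subrr addr0 scale1r addrAC.
  exact: Aconv.
have Bopen x : B x -> nbhs x B.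
  move=> Bx; have := nbhsB (- w0) (open_nbhs_nbhs (conj oA Bx)).
  rewrite addrCA addNr addr0; apply: filterS => _ [a Aa <-].
  by rewrite /B /= addrAC addNr add0r.
have B0 : nbhs 0 B by apply: Bopen; rewrite /B /= add0r.
have [G [Glin Gp Gw]] := hahn_banach (gauge_add Bconv B0) (gauge_scale Bconv B0) (- w0).
have Glt1 w : B w -> G w < 1 by move=> Bw; exact: le_lt_trans (Gp w) (gauge_lt1 Bopen Bw).
(* [- w0] lies outside [B], so its gauge, which [G] attains, is at least [1] *)
have Gw0 : 1 <= G (- w0).
  rewrite Gw leNgt; apply/negP => /(gauge_lt1_mem Bconv B0).
  by rewrite /B /= addNr.
exists (fun u => - G u); split.
- by move=> a b x y /=; rewrite Glin; ring.
- by move=> x; apply: continuousN; exact: linear_form_continuous Glin B0 Glt1 x.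
- move=> u Au; have Bu : B (u - w0) by rewrite /B /= subrK.
  by have := Glt1 _ Bu; rewrite (linear_formD Glin); lra.
Qed.

Lemma nbhs_linear_form_lt {R : realType} {E : tvsType R} (F : E -> R) (O : set E) c w :
  linear_form F -> nbhs c O -> 0 < F w -> exists2 o, O o & F o < F c.
Proof.
move=> hF hO Fw; have := nbhsB (- c) hO; rewrite addNr => O0.
have := @scaler_near R E w 0 _; rewrite scale0r => /(_ _ O0) [e e0 he].
have e2 : 0 < e / 2 by rewrite divr_gt0.
have [|o Oo eo] := he (- (e / 2)).
  by rewrite subr0 normrN gtr0_norm // ltr_pdivrMr // ltr_pMr // ltr1n.
exists o => //; have -> : o = c + (- (e / 2)) *: w by rewrite -eo addNKr.
by rewrite (linear_formD hF) (linear_formZ hF) mulNr ltrBlDr ltrDl mulr_gt0.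
Qed.

Lemma open_image2B {R : realType} {E : tvsType R} (O A : set E) :
  open O -> open [set u - e | u in O & e in A].
Proof.
rewrite openE => oO _ [u Ou [e Ae <-]].
have := nbhsB (- e) (oO _ Ou); rewrite addrC.
by apply: filterS => _ [v Ov <-]; exists v => //; exists e; rewrite // addrC.
Qed.

Lemma convex_image2B {R : realType} {M : lmodType R} (O A : set M) :
  convex O -> convex A -> convex [set u - e | u in O & e in A].
Proof.
move=> cO cA _ _ l hl [u Ou [e Ae <-]] [u' Ou' [e' Ae' <-]].
exists (l *: u + (1 - l) *: u'); first exact: cO.
by exists (l *: e + (1 - l) *: e'); [exact: cA|rewrite !scalerBr opprD addrACA].
Qed.

Section epigraph_separation.
Context {R : realType} {E : tvsType R}.

Lemma nbhs_convex_open (x : E) (N : set E) : nbhs x N ->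
  exists U : set E, [/\ open U, U x, U `<=` N & convex U].
Proof.
move=> hN; have [Bs Bconv [Bo Bb]] := @locally_convex R E.
have [U [BU Ux] UN] := Bb x N hN.
exists U; split => //; first exact: Bo.
move=> y z l /andP[l0 l1] Uy Uz.
have := Bconv U (mem_set BU) y z (Itv01 l0 l1) (mem_set Uy) (mem_set Uz).
by rewrite inE.
Qed.

Let box (U : set E) (lo hi : R) := [set z : E * R^o | U z.1 /\ lo < z.2 < hi].

Let box_open U lo hi : open U -> open (box U lo hi).
Proof.
move=> oU; rewrite openE => -[y r] [/= Uy rlh].
exists (U, [set r : R^o | lo < r < hi]); first split.
- exact: open_nbhs_nbhs.
- have : open_nbhs (r : R^o) `]lo, hi[%classic.
    by split; [exact: itv_open|rewrite /= in_itv].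
  by move=> /open_nbhs_nbhs; apply: filterS => t /=; rewrite in_itv.
- by move=> [y' r'] [/= Uy' r'lh]; split.
Qed.

Let box_convex U lo hi : convex U -> convex (box U lo hi).
Proof.
move=> cU; apply: convexW => x y l /andP[l0 l1] [Ux /andP[x1 x2]] [Uy /andP[y1 y2]].
split; first by apply: cU => //; rewrite !ltW.
by rewrite /= /GRing.scale /=; apply/andP; split; nra.
Qed.

Lemma linear_form_pair (F : E * R^o -> R) : linear_form F ->
  forall z, F z = F (z.1, 0) + F (0, 1) * z.2.
Proof.
move=> hF [y r]; have dec : (y, r) = 1 *: (y, 0 : R^o) + r *: (0 : E, 1 : R^o).
  rewrite /GRing.scale /= /GRing.add /= /add_pair /scale_pair /=.
  by rewrite scale1r !scaler0 addr0 add0r /GRing.scale /= mulr1.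
by rewrite {1}dec hF mul1r mulrC.
Qed.

Variable f : E -> \bar R.

Definition epigraph := [set z : E * R^o | (f z.1 <= (z.2 : R)%:E)%E].

Lemma epigraph_convex : convex_efun f -> convex epigraph.
Proof.
move=> fconv; apply: convexW => x y l /andP[l0 l1] ex ey; rewrite /epigraph /=.
apply: le_trans (fconv _ _ _ _) _; first by rewrite l0 l1.
have l0' : (0 <= l%:E)%E by rewrite lee_fin ltW.
have l1' : (0 <= (1 - l)%:E)%E by rewrite lee_fin subr_ge0 ltW.
apply: le_trans (leeD (lee_wpmul2l l0' ex) (lee_wpmul2l l1' ey)) _.
by rewrite -!EFinM -EFinD.
Qed.

Hypotheses (fproper : proper_fun f) (fconv : convex_efun f)
  (flsc : lower_semicontinuous f).

(* [0] is separated from the open convex set [box - epigraph], where the box around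
   [(x0, a)] lies strictly below the graph of [f] by lower semicontinuity. *)
Lemma epigraph_separation x0 a : (a%:E < f x0)%E ->
  exists F : E * R^o -> R, exists s : R,
    [/\ linear_form F, continuous F, (forall e, epigraph e -> F e <= s) & s < F (x0, a)].
Proof.
move=> af.
have [b ab bf] : exists2 b : R, a < b & (b%:E < f x0)%E.
  move: af; case: (f x0) => [r| |] //= => [|_]; last by exists (a + 1); [lra|rewrite ltry].
  by rewrite !lte_fin => ar; exists ((a + r) / 2); rewrite ?lte_fin; lra.
have [N hN Nb] := flsc bf.
have [U [oU Ux0 UN cU]] := nbhs_convex_open hN.
pose O := box U (a - 1) b.
have O_x0 : O (x0, a) by split => //=; apply/andP; split; lra.
have oO : open O := @box_open U (a - 1) b oU.
pose D := [set u - e | u in O & e in epigraph].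
have nD0 : ~ D 0.
  move=> [u [Uu /andP[_ ub]] [e Ee /eqP]]; rewrite subr_eq0 => /eqP eu.
  rewrite -eu in Ee; have := Nb _ (UN _ Uu).
  by rewrite ltNge (le_trans Ee) // lee_fin ltW.
case: fproper => _ [x1 fx1].
have epi1 : epigraph (x1, fine (f x1)) by rewrite /epigraph /= fineK.
have D0 : D ((x0, a) - (x1, fine (f x1))) by exists (x0, a) => //; exists (x1, fine (f x1)).
have [F [Flin Fcont Fpos]] := open_convex_separation
  (convex_image2B (@box_convex U (a - 1) b cU) (epigraph_convex fconv))
  (open_image2B _ oO) (ex_intro _ _ D0) nD0.
have Foe u e : O u -> epigraph e -> F e < F u.
  move=> Ou Ee; have := Fpos (u - e) (ex_intro2 _ _ u Ou (ex_intro2 _ _ e Ee erefl)).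
  by rewrite (linear_formB Flin) subr_gt0.
have [u1 Ou1 Fu1] := nbhs_linear_form_lt Flin (open_nbhs_nbhs (conj oO O_x0)) (Fpos _ D0).
have hs : has_sup [set F e | e in epigraph].
  split; first by exists (F (x1, fine (f x1))), (x1, fine (f x1)).
  by exists (F u1) => _ [e Ee <-]; apply/ltW/Foe.
exists F, (sup [set F e | e in epigraph]); split => //.
  by move=> e Ee; apply: sup_upper_bound => //; exists e.
apply: le_lt_trans Fu1; apply: ge_sup; first by case: hs.
by move=> _ [e Ee <-]; apply/ltW/Foe.
Qed.

End epigraph_separation.

Section affine_minorant.
Context {R : realType} {E : tvsType R} (f : E -> \bar R).
Hypotheses (fproper : proper_fun f) (fconv : convex_efun f)
  (flsc : lower_semicontinuous f).

Definition affine_minorant (psi : E -> R) (s : R) :=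
  [/\ linear_form psi, continuous psi & forall y, ((psi y - s)%:E <= f y)%E].

Lemma epigraph_separation_split x0 a : (a%:E < f x0)%E ->
  exists phi : E -> R, exists beta s : R,
  [/\ linear_form phi, continuous phi, beta <= 0,
      (forall y r, (f y <= r%:E)%E -> phi y + beta * r <= s) & s < phi x0 + beta * a].
Proof.
move=> /(epigraph_separation fproper fconv flsc) [F [s [Flin Fcont Fs Fx0]]].
have Fpair := linear_form_pair Flin.
exists (fun y => F (y, 0)), (F (0, 1)), s; split.
- move=> c d x y.
  have -> : (c *: x + d *: y, 0 : R^o) = c *: (x, 0 : R^o) + d *: (y, 0 : R^o).
    by rewrite /GRing.scale /= /GRing.add /= /add_pair /scale_pair /= !scaler0 addr0.
  exact: Flin.
- move=> y; apply: (@continuous_comp _ _ _ (fun y : E => (y, 0 : R^o)) F y).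
    exact: (cvg_pair (@cvg_id _ (nbhs y)) (cvg_cst (0 : R^o))).
  exact: Fcont.
- (* the epigraph is unbounded upwards, so a positive slope would break the bound *)
  rewrite leNgt; apply/negP => bpos.
  case: fproper => _ [x1 fx1].
  have Fe1s : F (x1, fine (f x1)) <= s by apply: Fs; rewrite /epigraph /= fineK.
  pose t := (s - F (x1, fine (f x1))) / F (0, 1) + 1.
  have t0 : 0 <= t by rewrite addr_ge0 // divr_ge0 ?subr_ge0 // ltW.
  have : epigraph f (x1, fine (f x1) + t).
    by rewrite /epigraph /= EFinD fineK //; apply: leeDl; rewrite lee_fin.
  move=> /Fs; rewrite Fpair /= mulrDr addrA -(Fpair (x1, _)) /t mulrDr mulrCA.
  by rewrite mulfV ?gt_eqF // !mulr1; lra.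
- by move=> y r fy; rewrite -(Fpair (y, r)); apply: Fs.
- by rewrite -(Fpair (x0, a)).
Qed.

Lemma affine_minorant_of_separation x0 a (phi : E -> R) beta s :
  linear_form phi -> continuous phi -> beta < 0 ->
  (forall y r, (f y <= r%:E)%E -> phi y + beta * r <= s) -> s < phi x0 + beta * a ->
  affine_minorant (fun y => phi y / (- beta)) (s / (- beta)) /\
  a < phi x0 / (- beta) - s / (- beta).
Proof.
move=> hl hc b0 hmin hx0; rewrite -oppr_gt0 in b0.
split; last by rewrite -mulrBl ltr_pdivlMr //; lra.
split.
- by move=> c d x y; rewrite hl mulrDl !mulrA.
- by move=> y; apply: cvgMr_tmp; exact: hc.
- move=> y; case: fproper => fnoo _.
  have := fnoo y; case E1 : (f y) => [r| |] //= _; last exact: leey.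
  have := hmin y r; rewrite E1 lexx => /(_ isT) h.
  by rewrite lee_fin -mulrBl ler_pdivrMr //; lra.
Qed.

Lemma affine_minorant_exists : exists psi s, affine_minorant psi s.
Proof.
case: fproper => _ [x1 fx1].
have h1 : ((fine (f x1) - 1)%:E < f x1)%E.
  by rewrite -[ltRHS]fineK // lte_fin; lra.
have [phi [beta [s [hl hc bn hmin hx]]]] := epigraph_separation_split h1.
have := hmin x1 (fine (f x1)); rewrite fineK // lexx => /(_ isT) hx1.
have bneg : beta < 0.
  rewrite lt_neqAle bn andbT; apply/eqP => b0.
  by rewrite b0 !mul0r in hx hx1; have := lt_le_trans hx hx1; rewrite ltxx.
by have [hm _] := affine_minorant_of_separation hl hc bneg hmin hx; do 2 eexists; exact: hm.
Qed.

(* When the separating hyperplane is vertical ([beta = 0]) we add a large multiple of it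
   to an arbitrary affine minorant. *)
Lemma affine_minorant_above x0 a : (a%:E < f x0)%E ->
  exists psi s, affine_minorant psi s /\ a < psi x0 - s.
Proof.
move=> af; have [psi0 [s0 [l0 c0 m0]]] := affine_minorant_exists.
have [phi [beta [s [hl hc bn hmin hx]]]] := epigraph_separation_split af.
have [bneg|b0] := ltP beta 0.
  have [hm ha] := affine_minorant_of_separation hl hc bneg hmin hx.
  by do 2 eexists; split; [exact: hm|exact: ha].
have {b0 bn} b0 : beta = 0 by apply/eqP; rewrite eq_le bn b0.
rewrite b0 mul0r addr0 in hx.
have hd : 0 < phi x0 - s by rewrite subr_gt0.
pose lam := (`|a - (psi0 x0 - s0)| + 1) / (phi x0 - s).
have lam0 : 0 <= lam by rewrite divr_ge0 // ?ltW // addr_ge0.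
exists (fun y => psi0 y + lam * phi y), (s0 + lam * s); split; first split.
- by move=> c d x y; rewrite l0 hl; ring.
- by move=> y; apply: cvgD; [exact: c0|apply: cvgMl_tmp; exact: hc].
- move=> y; case: fproper => fnoo _.
  have := fnoo y; case E1 : (f y) => [r| |] //= _; last exact: leey.
  have := hmin y r; rewrite E1 lexx b0 mul0r addr0 => /(_ isT) h.
  have := m0 y; rewrite E1 lee_fin => h2.
  have : lam * (phi y - s) <= 0 by rewrite mulr_ge0_le0 // subr_le0.
  by rewrite lee_fin; lra.
- have e1 : lam * (phi x0 - s) = `|a - (psi0 x0 - s0)| + 1.
    by rewrite /lam divfK // gt_eqF.
  by have := ler_norm (a - (psi0 x0 - s0)); rewrite mulrBr in e1; lra.
Qed.

End affine_minorant.

Lemma lte_EFin_dense {R : realType} (c : R) (x : \bar R) : (c%:E < x)%E ->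
  exists2 c' : R, c < c' & (c'%:E < x)%E.
Proof.
case: x => [r| |] //= => [|_]; last by exists (c + 1); [lra|rewrite ltry].
by rewrite lte_fin => cr; exists ((c + r) / 2); rewrite ?lte_fin; lra.
Qed.

Lemma lee_of_pos_lt {R : realType} (x y : \bar R) : (0 <= y)%E ->
  (forall c : R, 0 < c -> (c%:E < x)%E -> (c%:E <= y)%E) -> (x <= y)%E.
Proof.
move=> y0 hc; rewrite leNgt; apply/negP => yx.
case: y y0 hc yx => [m| _ _|//]; last by rewrite ltNge leey.
rewrite lee_fin => m0 hc /lte_EFin_dense [c mc cx].
by have := hc c (le_lt_trans m0 mc) cx; rewrite lee_fin leNgt mc.
Qed.

Lemma ereal_sup_image_EFin {R : realType} {T : Type} (g : T -> R) (A : set T) :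
  A !=set0 -> has_ubound (g @` A) ->
  ereal_sup [set (g x)%:E | x in A] = (sup (g @` A))%:E.
Proof.
move=> [x Ax] ub; rewrite -[X in ereal_sup X](image_comp g EFin) ereal_sup_EFin //.
by exists (g x), x.
Qed.

Lemma sup_add_le {R : realType} (A B : set R) (s : R) : A !=set0 -> B !=set0 ->
  (forall a b, A a -> B b -> a + b <= s) -> sup A + sup B <= s.
Proof.
move=> [a0 Aa0] B0 hAB.
have supB a : A a -> sup B <= s - a.
  by move=> Aa; apply: ge_sup => // b Bb; have := hAB _ _ Aa Bb; lra.
suff : sup A <= s - sup B by lra.
by apply: ge_sup; [exists a0|move=> a Aa; have := supB _ Aa; lra].
Qed.

Lemma as_impl {d : measure_display} {Omega : measurableType d} {R : realType}
  (P : probability Omega R) (Q1 Q2 : Omega -> Prop) :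
  (forall t, Q1 t -> Q2 t) -> as_ P Q1 -> as_ P Q2.
Proof. by move=> h; rewrite /as_; apply: filterS. Qed.

Section marrm_duality.
Context {d : measure_display} {Omega : measurableType d} {R : realType}
  (P : probability Omega R) (V : tvsType R) (iota : V -> Omega -> R)
  (S K : set V) (pi rhot : V -> R).
Hypotheses (iota_log : log_embedding P iota) (S_ne : S !=set0)
  (CSK : CS_sub_K S K) (pi_pos : pricing S pi) (rhot_RRM : RRM P iota K rhot).

Local Notation B := (B_rhot K rhot).
Local Notation eta := (eta_R S K pi rhot).
Local Notation rho := (rho_log S K pi rhot).

Lemma K_full u : K u.
Proof. by case: S_ne => z Sz; have := CSK (u + z) Sz; rewrite addrK. Qed.

Lemma iota0 : as_ P (fun t => iota 0 t = 0).
Proof.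
case: iota_log => _ ilin _; have := ilin 0 0 0 0; rewrite !scale0r addr0.
by apply: as_impl => t ->; rewrite !mul0r addr0.
Qed.

Lemma rhot0 : rhot 0 = 1.
Proof.
case: rhot_RRM => _ _ _ rone; apply: rone; first exact: K_full.
by apply: as_impl iota0 => t ->; exact: expR0.
Qed.

Lemma B_rhot0 : B 0.
Proof. by split; [exact: K_full|rewrite rhot0]. Qed.

Lemma A_nuE : A_nu K rhot = B.
Proof.
case: rhot_RRM => rpos _ _ _; apply/seteqP; split => u [Ku h]; split => //.
  by rewrite -ler_ln ?posrE ?rpos ?K_full // ln1.
by rewrite /nu -ln1 ler_ln ?posrE ?rpos.
Qed.

Lemma rho_log_le_price x z : S z -> B (x - z) -> (rho x <= (ln (pi z))%:E)%E.
Proof. by move=> Sz Bxz; apply: ereal_inf_lbound; exists z => //; rewrite A_nuE. Qed.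

Lemma ln_lt_rho_log c x : 0 < c -> (c%:E < eta x)%E -> ((ln c)%:E < rho x)%E.
Proof.
move=> c0 /lte_EFin_dense [c' cc' c'eta].
have c'0 : 0 < c' by apply: lt_trans cc'.
apply: (@lt_le_trans _ _ (ln c')%:E); first by rewrite lte_fin ltr_ln ?posrE.
apply: le_ereal_inf_tmp => _ [l [Sl Al] <-]; rewrite lee_fin /pi_log.
rewrite ler_ln ?posrE ?pi_pos // -lee_fin; apply/ltW/(lt_le_trans c'eta).
by apply: ereal_inf_lbound; exists l => //; rewrite -A_nuE.
Qed.

Lemma B_rhot_scaleN v t : as_ P (fun w => 1 <= expR (iota v w)) -> 0 <= t ->
  B ((- t) *: v).
Proof.
case: iota_log => _ ilin _; case: rhot_RRM => _ _ rmono _ v1 t0.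
split; first exact: K_full.
rewrite -rhot0; apply: rmono; try exact: K_full.
have := ilin (- t) 0 v v; rewrite scale0r addr0 => itv.
move: v1 itv iota0; rewrite /as_; apply: filterS3 => w v1w -> ->.
rewrite -expR0 ler_expR in v1w.
by rewrite ler_expR mul0r addr0 mulNr oppr_le0 mulr_ge0.
Qed.

Definition dual_value (phi : V -> R) (v : V) : \bar R :=
  expeR ((phi v)%:E - ereal_sup [set (phi y)%:E | y in B]
         - ereal_sup [set (phi z - ln (pi z))%:E | z in S])%E.

Lemma dual_value_le_eta_R phi v : linear_form phi -> (dual_value phi v <= eta v)%E.
Proof.
move=> hl; apply: le_ereal_inf_tmp => _ [z [Sz Bz] <-].
have h1 : ((phi (v - z))%:E <= ereal_sup [set (phi y)%:E | y in B])%E.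
  by apply: ereal_sup_ubound; exists (v - z).
have h2 : ((phi z - ln (pi z))%:E <= ereal_sup [set (phi z - ln (pi z))%:E | z in S])%E.
  by apply: ereal_sup_ubound; exists z.
have -> : (pi z)%:E = expeR (ln (pi z))%:E by rewrite /= lnK ?posrE ?pi_pos.
rewrite /dual_value lee_expeR; apply: le_trans (leeB (leeB (lexx _) h1) h2) _.
by rewrite -!EFinB lee_fin (linear_formB hl); lra.
Qed.

Lemma D_ge1_zero : D_ge1 P iota K (fun _ => 0).
Proof. by split => [a b x y|x|]; [rewrite !mulr0 addr0|exact: cvg_cst|]. Qed.

Lemma rho_minorant_bound psi s : linear_form psi ->
  (forall y, ((psi y - s)%:E <= rho y)%E) ->
  forall b z, B b -> S z -> psi b + (psi z - ln (pi z)) <= s.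
Proof.
move=> hl hmin b z Bb Sz.
have := rho_log_le_price (x := z + b) Sz; rewrite addrAC subrr add0r.
move=> /(_ Bb) /(le_trans (hmin _)).
by rewrite lee_fin (linear_formD hl); lra.
Qed.

Lemma rho_minorant_D_ge1 psi s : affine_minorant rho psi s -> D_ge1 P iota K psi.
Proof.
move=> [hl hc hmin]; split => // v0 _ v1; have [z Sz] := S_ne.
rewrite leNgt; apply/negP => neg.
(* [- t *: v0] stays in [B] for [t >= 0], while [psi] grows without bound along it *)
pose t := (`|s - psi z + ln (pi z)| + 1) / (- psi v0).
have t0 : 0 <= t by rewrite divr_ge0 ?oppr_ge0 ?ltW // addr_ge0.
have := rho_minorant_bound hl hmin (B_rhot_scaleN v1 t0) Sz.
have -> : psi ((- t) *: v0) = `|s - psi z + ln (pi z)| + 1.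
  by rewrite (linear_formZ hl) mulNr -mulrN /t divfK // oppr_eq0 lt_eqF.
by have := ler_norm (s - psi z + ln (pi z)); lra.
Qed.

Lemma rho_minorant_dual_value psi s v : affine_minorant rho psi s ->
  ((expR (psi v - s))%:E <= dual_value psi v)%E.
Proof.
move=> [hl _ hmin]; have [z0 Sz0] := S_ne.
have bnd := rho_minorant_bound hl hmin.
have B_ne : B !=set0 by exists 0; exact: B_rhot0.
have ubB : has_ubound (psi @` B).
  by exists (s - psi z0 + ln (pi z0)) => _ [b Bb <-]; have := bnd _ _ Bb Sz0; lra.
have ubS : has_ubound ((fun z => psi z - ln (pi z)) @` S).
  by exists (s - psi 0) => _ [z Sz <-]; have := bnd _ _ B_rhot0 Sz; lra.
rewrite /dual_value !ereal_sup_image_EFin // -!EFinB /= lee_fin ler_expR.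
suff : sup (psi @` B) + sup ((fun z => psi z - ln (pi z)) @` S) <= s by lra.
apply: sup_add_le; [exact: image_nonempty|exact: image_nonempty|].
by move=> _ _ [b Bb <-] [z Sz <-]; exact: bnd.
Qed.

Lemma eta_R_le_sup_dual v :
  proper_fun rho -> convex_efun rho -> lower_semicontinuous rho ->
  (eta v <= ereal_sup [set dual_value phi v | phi in D_ge1 P iota K])%E.
Proof.
move=> hprop hconv hlsc; apply: lee_of_pos_lt => [|c c0 /(ln_lt_rho_log c0) lnc].
  by apply: le_trans (ereal_sup_ubound (ex_intro2 _ _ _ D_ge1_zero erefl)); exact: expeR_ge0.
have [psi [s [hpsi lncs]]] := affine_minorant_above hprop hconv hlsc lnc.
apply: le_trans (ereal_sup_ubound (ex_intro2 _ _ _ (rho_minorant_D_ge1 hpsi) erefl)).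
apply: le_trans (rho_minorant_dual_value v hpsi); rewrite lee_fin.
by rewrite -[leLHS]lnK ?posrE // ler_expR ltW.
Qed.

End marrm_duality.

Theorem mainTheorem13 (d : measure_display) (Omega : measurableType d)
  (R : realType) (P : probability Omega R) (V : tvsType R)
  (iota : V -> Omega -> R) (S K : set V) (pi rhot : V -> R) :
  log_embedding P iota ->
  S !=set0 -> K !=set0 ->
  is_cone_K P iota K -> CS_sub_K S K -> Linfpp_sub_K P iota K ->
  pricing S pi -> RRM P iota K rhot ->
  proper_fun (rho_log S K pi rhot) ->
  convex_efun (rho_log S K pi rhot) ->
  lower_semicontinuous (rho_log S K pi rhot) ->
  forall v : V,
    eta_R S K pi rhot v =
    ereal_sup [set expeR ((phi v)%:E
                 - ereal_sup [set (phi y)%:E | y in B_rhot K rhot]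
                 - ereal_sup [set (phi z - ln (pi z))%:E | z in S])%E
              | phi in D_ge1 P iota K].
Proof.
move=> iota_log S_ne _ _ CSK _ pi_pos rhot_RRM hprop hconv hlsc v.
apply/eqP; rewrite eq_le eta_R_le_sup_dual //=.
by apply: ge_ereal_sup => _ [phi [hl _ _] <-]; exact: dual_value_le_eta_R.
Qed.
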